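(* Let $1\le p<\infty$ and let $d_{w,p}$ be a Lorentz sequence space. Let $Y$ be a complemented closed subspace of $d_{w,p}$ isomorphic to $\ell_p$, let $P\in L(d_{w,p})$ be a projection with range $Y$, and let $U\colon Y\to\ell_p$ be an isomorphism onto $\ell_p$. If $T=jUP$, then $J_T=J^j$.
   Context: Let $1\le p<\infty$ and let $w=(w_n)$ be a real sequence with $w_1=1$, $w_n\downarrow 0$ and $\sum_n w_n=\infty$. The Lorentz sequence space $d_{w,p}$ is the Banach space of all $x=(x_n)\in c_0$ with $\|x\|_{d_{w,p}}=\big(\sum_{n}w_n (x^*_n)^p\big)^{1/p}<\infty$, where $(x^*_n)$ is the non-increasing rearrangement of $(|x_n|)$. Let $(e_n)$ be the unit vector basis of $d_{w,p}$ and $(f_n)$ that of $\ell_p$; $j\colon\ell_p\to d_{w,p}$ is the formal identity, $j(f_n)=e_n$. $J^j$ is the set of operators $S\in L(d_{w,p})$ of the form $S=AjB$ with $A\in L(d_{w,p})$, $B\in L(d_{w,p},\ell_p)$. $J_T=\{\sum_{i=1}^n A_iTB_i: n\in\mathbb N, A_i,B_i\in L(d_{w,p})\}$ is the ideal generated by $T$. *)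

From HB Require Import structures.
From mathcomp Require Import all_boot all_order all_algebra.
From mathcomp Require Import all_classical all_reals all_analysis.
Set Implicit Arguments. Unset Strict Implicit. Unset Printing Implicit Defensive.
Import Order.TTheory GRing.Theory Num.Theory.
Import numFieldNormedType.Exports.
Local Open Scope classical_set_scope.
Local Open Scope ring_scope.

Section Defs.
Variable R : realType.
Notation seqR := (nat -> R).

Definition lp_mem (p : R) (x : seqR) : Prop :=
  (\sum_(n <oo) ((`|x n| `^ p)%:E) < +oo)%E.
Definition lp_norm (p : R) (x : seqR) : R :=
  (fine (\sum_(n <oo) ((`|x n| `^ p)%:E))) `^ p^-1.

Definition c0_mem (x : seqR) : Prop := x n @[n --> \oo] --> (0 : R).

(* non-increasing rearrangement of (|x_n|) (0-indexed): x*_n is the infimum,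
   over all sets F of at most n indices, of sup_{k notin F} |x_k| *)
Definition rearr (x : seqR) (n : nat) : R :=
  inf [set sup [set `|x k| | k in [set k | k \notin s]]
      | s in [set s : seq nat | (size s <= n)%N]].

(* admissible weight sequence: w_1 = 1 (index 0 here), w_n decreasing to 0,
   sum w_n = oo *)
Definition lorentz_weight (w : seqR) : Prop :=
  w 0%N = 1 /\ (forall n m : nat, (n <= m)%N -> w m <= w n) /\
  (w n @[n --> \oo] --> (0 : R)) /\ (\sum_(n <oo) (w n)%:E = +oo)%E.

Definition d_mem (w : seqR) (p : R) (x : seqR) : Prop :=
  c0_mem x /\ (\sum_(n <oo) ((w n * rearr x n `^ p)%:E) < +oo)%E.
Definition d_norm (w : seqR) (p : R) (x : seqR) : R :=
  (fine (\sum_(n <oo) ((w n * rearr x n `^ p)%:E))) `^ p^-1.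

(* f is a bounded linear operator from (X, nX) to (Y, nY), where X, Y are
   sets of sequences; only values of f on X matter *)
Definition is_op (X : set seqR) (nX : seqR -> R) (Y : set seqR) (nY : seqR -> R)
  (f : seqR -> seqR) : Prop :=
  (forall x, X x -> Y (f x)) /\
  (forall (a : R) x y, X x -> X y ->
     f (fun n => a * x n + y n) = (fun n => a * f x n + f y n)) /\
  exists C : R, forall x, X x -> nY (f x) <= C * nX x.

Definition dwp (w : seqR) (p : R) : set seqR := d_mem w p.
Definition lp (p : R) : set seqR := lp_mem p.

Definition Ld (w : seqR) (p : R) := is_op (dwp w p) (d_norm w p) (dwp w p) (d_norm w p).
Definition Ldl (w : seqR) (p : R) := is_op (dwp w p) (d_norm w p) (lp p) (lp_norm p).

(* the formal identity j : l_p -> d_{w,p} *)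
Definition jmap : seqR -> seqR := fun x => x.

(* J^j = { A j B : A in L(d), B in L(d, l_p) } (operators compared on d) *)
Definition Jj (w : seqR) (p : R) (S : seqR -> seqR) : Prop :=
  Ld w p S /\ exists A B, Ld w p A /\ Ldl w p B /\
    forall x, dwp w p x -> S x = A (jmap (B x)).

Definition JT (w : seqR) (p : R) (T : seqR -> seqR) (S : seqR -> seqR) : Prop :=
  Ld w p S /\ exists (n : nat) (A B : nat -> seqR -> seqR),
    (forall i, (i < n)%N -> Ld w p (A i) /\ Ld w p (B i)) /\
    forall x, dwp w p x ->
      S x = (fun k => \sum_(i < n) A i (T (B i x)) k).

Definition closed_subspace_d (w : seqR) (p : R) (Y : set seqR) : Prop :=
  (forall y, Y y -> dwp w p y) /\ Y (fun _ => 0) /\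
  (forall (a : R) y z, Y y -> Y z -> Y (fun n => a * y n + z n)) /\
  (forall (u : nat -> seqR) x, (forall k, Y (u k)) -> dwp w p x ->
     (d_norm w p (fun n => u k n - x n) @[k --> \oo] --> (0 : R)) -> Y x).

End Defs.

From HB Require Import structures.
From mathcomp Require Import all_boot all_order all_algebra.
From mathcomp Require Import all_classical all_reals all_analysis.
From mathcomp Require Import zify ring lra.
Import Order.TTheory GRing.Theory Num.Theory.
Import numFieldNormedType.Exports.
Local Open Scope classical_set_scope.
Local Open Scope ring_scope.

(* J_T is contained in J^j because T = j (U P) with U P in L(d_{w,p}, l_p), so every
   A T B lies in J^j, and J^j is closed under sums: A1 j B1 + A2 j B2 = A j B with B x the
   interleaving of B1 x and B2 x in l_p and A y = A1 y_even + A2 y_odd.  Restricting to even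
   or odd coordinates does not increase non-increasing rearrangements, and the sum is
   bounded on d_{w,p} by the quasi-triangle inequality coming from (x + y)*_{2n} <= x*_n + y*_n.
   Conversely A j B = A T (V B) with V the inverse of U, as P fixes the range Y of V. *)

Set Implicit Arguments. Unset Strict Implicit.

Section SeriesFacts.
Variable R : realType.
Implicit Types g : nat -> \bar R.

Lemma nneseries_le_ub g (M : \bar R) : (forall n, 0 <= g n)%E ->
  (forall N, \sum_(0 <= i < N) g i <= M)%E -> (\sum_(i <oo) g i <= M)%E.
Proof.
move=> g0 gM; rewrite (cvg_lim _ (ereal_nondecreasing_cvgn
  (ereal_nondecreasing_series (P := xpredT) (N := 0) (fun n _ _ => g0 n)))) //.
by apply: ge_ereal_sup => _ [n _ <-].
Qed.

Lemma big_nat_double g N :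
  (\sum_(0 <= i < N.*2) g i = \sum_(0 <= k < N) (g k.*2 + g k.*2.+1))%E.
Proof.
elim: N => [|N IH]; first by rewrite !big_geq.
by rewrite doubleS !big_nat_recr //= IH addeA.
Qed.

Lemma nneseries_le_pairs g : (forall n, 0 <= g n)%E ->
  (\sum_(i <oo) g i <= \sum_(k <oo) (g k.*2 + g k.*2.+1))%E.
Proof.
move=> g0; apply: nneseries_le_ub => // N.
apply: (@le_trans _ _ (\sum_(0 <= i < N.*2) g i)%E).
  by apply: lee_sum_nneg_natr => //; rewrite -addnn; lia.
by rewrite big_nat_double; apply: nneseries_lim_ge => n _ _; exact: adde_ge0.
Qed.

Lemma powR_add_le (u v r : R) : 0 <= u -> 0 <= v -> 0 <= r ->
  (u + v) `^ r <= 2 `^ r * (u `^ r + v `^ r).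
Proof.
move=> u0 v0 r0; wlog uv : u v u0 v0 / u <= v.
  move=> H; have [/H|/ltW /H] := leP u v; first exact.
  by rewrite addrC [u `^ r + _]addrC; exact.
apply: (@le_trans _ _ ((2 * v) `^ r)).
  by apply: ge0_ler_powR; rewrite ?nnegrE ?addr_ge0 ?mulr_ge0 // mulr2n mulrDl mul1r lerD2r.
by rewrite powRM // ler_pM2l ?powR_gt0 // lerDr powR_ge0.
Qed.

Lemma fine_le_mulD (k : R) (a b c : \bar R) :
  a \is a fin_num -> b \is a fin_num -> c \is a fin_num ->
  (a <= k%:E * (b + c))%E -> fine a <= k * (fine b + fine c).
Proof. by case: a b c => [a| |] // [b| |] // [c| |] //; rewrite -EFinD -EFinM lee_fin. Qed.

End SeriesFacts.

Section Rearrangement.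
Variable R : realType.
Implicit Types (x y : nat -> R) (s : seq nat).

Definition bounded_seq x := exists M, forall k, `|x k| <= M.

Lemma c0_bounded x : c0_mem x -> bounded_seq x.
Proof.
move=> x0; have /cvg_seq_bounded [M [_ HM]] : cvgn x by apply/cvg_ex; exists 0.
by exists (M + 1) => k; apply: (HM (M + 1)); rewrite ?ltrDl.
Qed.

Lemma bounded_seqD x y :
  bounded_seq x -> bounded_seq y -> bounded_seq (fun k => x k + y k).
Proof.
move=> [Mx Hx] [My Hy]; exists (Mx + My) => k.
exact: le_trans (ler_normD _ _) (lerD (Hx k) (Hy k)).
Qed.

Lemma bounded_seq_comp x (f : nat -> nat) : bounded_seq x -> bounded_seq (x \o f).
Proof. by move=> [M HM]; exists M => k; exact: HM. Qed.

Definition sup_outside x s := sup [set `|x k| | k in [set k | k \notin s]].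

Lemma sumn_notin s : (sumn s).+1 \notin s.
Proof.
have le_sumn k : k \in s -> (k <= sumn s)%N.
  elim: s => [//|a s IH]; rewrite in_cons => /orP[/eqP->|/IH] /=; lia.
by apply/negP => /le_sumn; lia.
Qed.

Lemma sup_outside_ge x s k :
  bounded_seq x -> k \notin s -> `|x k| <= sup_outside x s.
Proof.
move=> [M HM] ks; apply: ub_le_sup; last by exists k.
by exists M => _ [j _ <-].
Qed.

Lemma sup_outside_ge0 x s : bounded_seq x -> 0 <= sup_outside x s.
Proof. by move=> bx; exact: le_trans (sup_outside_ge bx (sumn_notin s)). Qed.

Lemma sup_outside_le x s (M : R) :
  (forall k, k \notin s -> `|x k| <= M) -> sup_outside x s <= M.
Proof.
move=> HM; apply: ge_sup; last by move=> _ [k ks <-]; exact: HM.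
by exists `|x (sumn s).+1|, (sumn s).+1; first exact: sumn_notin.
Qed.

Lemma rearrE x n :
  rearr x n = inf [set sup_outside x s | s in [set s | (size s <= n)%N]].
Proof. by []. Qed.

Lemma rearr_le x n s :
  bounded_seq x -> (size s <= n)%N -> rearr x n <= sup_outside x s.
Proof.
move=> bx sn; rewrite rearrE; apply: ge_inf; last by exists s.
by exists 0 => _ [t _ <-]; exact: sup_outside_ge0.
Qed.

Lemma rearr_ge_lb x n (m : R) :
  (forall s, (size s <= n)%N -> m <= sup_outside x s) -> m <= rearr x n.
Proof.
move=> Hm; rewrite rearrE; apply: lb_le_inf; first by exists (sup_outside x [::]), [::].
by move=> _ [s sn <-]; exact: Hm.
Qed.

Lemma rearr_ge0 x n : bounded_seq x -> 0 <= rearr x n.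
Proof. by move=> bx; apply: rearr_ge_lb => s _; exact: sup_outside_ge0. Qed.

Lemma rearr0 n : rearr (fun=> 0) n = 0 :> R.
Proof.
have b0 : bounded_seq (fun=> 0) by exists 0 => k; rewrite normr0.
apply/eqP; rewrite eq_le rearr_ge0 // andbT.
apply: le_trans (rearr_le (s := [::]) b0 _) _ => //.
by apply: sup_outside_le => k _; rewrite normr0.
Qed.

(* Discarding the n indices chosen for x and the n chosen for y discards at most 2n indices. *)
Lemma rearrD_le x y n m : bounded_seq x -> bounded_seq y -> (n.*2 <= m)%N ->
  rearr (fun k => x k + y k) m <= rearr x n + rearr y n.
Proof.
move=> bx byy nm; rewrite -lerBlDr; apply: rearr_ge_lb => s sn.
rewrite lerBlDr addrC -lerBlDr; apply: rearr_ge_lb => t tn; rewrite lerBlDr.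
apply: le_trans (rearr_le (s := s ++ t) (bounded_seqD bx byy) _) _.
  by rewrite size_cat -addnn in nm *; lia.
apply: sup_outside_le => k; rewrite mem_cat negb_or => /andP[ks kt].
rewrite addrC; apply: le_trans (ler_normD _ _) _.
by apply: lerD; exact: sup_outside_ge.
Qed.

Lemma rearr_comp_le x (f g : nat -> nat) n :
  bounded_seq x -> cancel f g -> rearr (x \o f) n <= rearr x n.
Proof.
move=> bx fK; apply: rearr_ge_lb => s sn.
apply: le_trans (rearr_le (s := map g s) (bounded_seq_comp f bx) _) _.
  by rewrite size_map.
apply: sup_outside_le => k ks; apply: (sup_outside_ge (k := f k) bx).
by apply: contra ks => fks; rewrite -[k]fK map_f.
Qed.

End Rearrangement.

Section LorentzSpace.
Variables (R : realType) (w : nat -> R) (p : R).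
Hypotheses (w_weight : lorentz_weight w) (p_ge1 : 1 <= p).
Implicit Types (x y : nat -> R).

Let p_ge0 : 0 <= p. Proof. exact: le_trans p_ge1. Qed.

Definition d_series x := (\sum_(n <oo) (w n * rearr x n `^ p)%:E)%E.

Lemma d_normE x : d_norm w p x = fine (d_series x) `^ p^-1.
Proof. by []. Qed.

Lemma weight_ge0 n : 0 <= w n.
Proof.
have [_ [w_noninc [w0 _]]] := w_weight.
have := nonincreasing_cvgn_ge (fun m k mk => w_noninc m k mk) (cvgP _ w0) n.
by rewrite (cvg_lim _ w0).
Qed.

Lemma d_series_ge0 x : (0 <= d_series x)%E.
Proof. by apply: nneseries_ge0 => n _ _; rewrite lee_fin mulr_ge0 ?weight_ge0 ?powR_ge0. Qed.

Lemma d_series_fin_num x : (d_series x < +oo)%E -> d_series x \is a fin_num.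
Proof. by move=> fx; rewrite ge0_fin_numE // d_series_ge0. Qed.

Lemma d_norm_le x y :
  (d_series y < +oo)%E -> (d_series x <= d_series y)%E -> d_norm w p x <= d_norm w p y.
Proof.
move=> fy xy; have fx := le_lt_trans xy fy.
rewrite !d_normE; apply: ge0_ler_powR.
- by rewrite invr_ge0.
- by rewrite nnegrE fine_ge0 ?d_series_ge0.
- by rewrite nnegrE fine_ge0 ?d_series_ge0.
exact: fine_le (d_series_fin_num fx) (d_series_fin_num fy) xy.
Qed.

(* Terms 2k and 2k+1 of the series of x + y are bounded by term k of the series of x and y. *)
Lemma d_seriesD_le x y : bounded_seq x -> bounded_seq y ->
  (d_series (fun k => (x k + y k)%R) <= (2 * 2 `^ p)%:E * (d_series x + d_series y))%E.
Proof.
move=> bx byy; have [_ [w_noninc _]] := w_weight.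
have term_ge0 z n : (0 <= (w n * rearr z n `^ p)%:E)%E.
  by rewrite lee_fin mulr_ge0 ?weight_ge0 ?powR_ge0.
have two_terms_le (c a b : R) : 0 <= c -> 0 <= a -> 0 <= b ->
    ((c * (a + b) `^ p)%:E + (c * (a + b) `^ p)%:E <=
     (2 * 2 `^ p)%:E * ((c * a `^ p)%:E + (c * b `^ p)%:E))%E.
  move=> c0 a0 b0; have := ler_wpM2l c0 (powR_add_le a0 b0 p_ge0).
  by rewrite -!EFinD -EFinM lee_fin; nra.
apply: le_trans (nneseries_le_pairs _) _ => //.
rewrite /d_series -nneseriesD // -nneseriesZl => [|n _]; last exact: adde_ge0.
apply: lee_nneseries => [n _ _|k _]; first exact: adde_ge0.
have rx0 := rearr_ge0 k bx; have ry0 := rearr_ge0 k byy.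
have term_le m : (k.*2 <= m)%N ->
    w m * rearr (fun j => x j + y j) m `^ p <= w k * (rearr x k + rearr y k) `^ p.
  move=> km; apply: ler_pM; rewrite ?weight_ge0 ?powR_ge0 //; first by apply: w_noninc; lia.
  apply: ge0_ler_powR => //; last exact: rearrD_le.
  - by rewrite nnegrE rearr_ge0 //; exact: bounded_seqD.
  - by rewrite nnegrE addr_ge0.
apply: le_trans _ (two_terms_le _ _ _ (weight_ge0 k) rx0 ry0).
by apply: leeD; rewrite lee_fin term_le.
Qed.

Lemma d_memD x y : d_mem w p x -> d_mem w p y -> d_mem w p (fun k => x k + y k).
Proof.
move=> [x0 fx] [y0 fy]; split; first by rewrite /c0_mem -[0]addr0; exact: cvgD.
apply: le_lt_trans (d_seriesD_le (c0_bounded x0) (c0_bounded y0)) _.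
rewrite -(fineK (d_series_fin_num fx)) -(fineK (d_series_fin_num fy)).
by rewrite -EFinD -EFinM ltry.
Qed.

Lemma d_norm_quasi_triangle : exists2 K : R, 0 <= K & forall x y,
  d_mem w p x -> d_mem w p y ->
  d_norm w p (fun k => x k + y k) <= K * (d_norm w p x + d_norm w p y).
Proof.
exists ((2 * 2 `^ p) `^ p^-1 * 2 `^ p^-1); first by rewrite mulr_ge0 ?powR_ge0.
move=> x y dx dy; have [[x0 fx] [y0 fy]] := (dx, dy).
have fxy : (d_series (fun k => (x k + y k)%R) < +oo)%E by case: (d_memD dx dy).
have sxy := fine_le_mulD (d_series_fin_num fxy) (d_series_fin_num fx)
  (d_series_fin_num fy) (d_seriesD_le (c0_bounded x0) (c0_bounded y0)).
have fine_ge0 z : 0 <= fine (d_series z) by rewrite fine_ge0 ?d_series_ge0.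
have pV0 : 0 <= p^-1 by rewrite invr_ge0.
have c0 : 0 <= 2 * 2 `^ p :> R by rewrite mulr_ge0 ?powR_ge0.
have rhs0 := mulr_ge0 c0 (addr_ge0 (fine_ge0 x) (fine_ge0 y)).
rewrite d_normE; apply: le_trans (ge0_ler_powR pV0 (fine_ge0 _) rhs0 sxy) _.
rewrite (powRM _ c0 (addr_ge0 (fine_ge0 x) (fine_ge0 y))) -mulrA.
apply: ler_wpM2l; first exact: powR_ge0.
exact: powR_add_le.
Qed.

Lemma d_series_comp_le x (f g : nat -> nat) :
  cancel f g -> bounded_seq x -> (d_series (x \o f) <= d_series x)%E.
Proof.
move=> fK bx; apply: lee_nneseries => [n _ _|n _].
  by rewrite lee_fin mulr_ge0 ?weight_ge0 ?powR_ge0.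
rewrite lee_fin; apply: ler_wpM2l; first exact: weight_ge0.
apply: ge0_ler_powR => //.
- by rewrite nnegrE rearr_ge0 //; exact: bounded_seq_comp.
- by rewrite nnegrE rearr_ge0.
exact: rearr_comp_le fK.
Qed.

Lemma d_mem_comp x (f g : nat -> nat) :
  cancel f g -> f @ \oo --> \oo -> d_mem w p x -> d_mem w p (x \o f).
Proof.
move=> fK f_oo [x0 fx]; split; first exact: cvg_comp f_oo x0.
exact: le_lt_trans (d_series_comp_le fK (c0_bounded x0)) fx.
Qed.

Lemma d_norm_comp_le x (f g : nat -> nat) :
  cancel f g -> d_mem w p x -> d_norm w p (x \o f) <= d_norm w p x.
Proof. by move=> fK [x0 fx]; apply: d_norm_le fx (d_series_comp_le fK (c0_bounded x0)). Qed.

End LorentzSpace.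

Section BoundedOperators.
Variable R : realType.
Implicit Types (X Y Z : set (nat -> R)) (nX nY nZ : (nat -> R) -> R).
Implicit Types (f g : (nat -> R) -> nat -> R).

Lemma is_op_bound X nX Y nY f : (forall x, X x -> 0 <= nX x) ->
  is_op X nX Y nY f -> exists2 C, 0 <= C & forall x, X x -> nY (f x) <= C * nX x.
Proof.
move=> nX0 [_ [_ [C HC]]]; exists (Num.max C 0); first by rewrite le_max lexx orbT.
move=> x Xx; apply: le_trans (HC x Xx) _; apply: ler_wpM2r; first exact: nX0.
by rewrite le_max lexx.
Qed.

Lemma is_op_comp X nX Y nY Z nZ f g :
  (forall x, X x -> 0 <= nX x) -> (forall y, Y y -> 0 <= nY y) ->
  is_op X nX Y nY f -> is_op Y nY Z nZ g -> is_op X nX Z nZ (fun x => g (f x)).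
Proof.
move=> nX0 nY0 opf opg.
have [Cf Cf0 Hf] := is_op_bound nX0 opf; have [Cg Cg0 Hg] := is_op_bound nY0 opg.
case: opf => fXY [flin _]; case: opg => gYZ [glin _].
split; first by move=> x /fXY /gYZ.
split; first by move=> a x y Xx Xy; rewrite flin // glin //; exact: fXY.
exists (Cg * Cf) => x Xx; apply: le_trans (Hg _ (fXY _ Xx)) _.
by rewrite -mulrA; apply: ler_wpM2l => //; exact: Hf.
Qed.

Lemma is_op_codom X nX Y Y' nY f :
  (forall x, X x -> Y' (f x)) -> is_op X nX Y nY f -> is_op X nX Y' nY f.
Proof. by move=> fXY' [_ opf]. Qed.

End BoundedOperators.

Section LorentzOperators.
Variables (R : realType) (w : nat -> R) (p : R).
Hypotheses (w_weight : lorentz_weight w) (p_ge1 : 1 <= p).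

Let p_gt0 : 0 < p. Proof. exact: lt_le_trans ltr01 p_ge1. Qed.

Lemma d_norm_ge0 x : 0 <= d_norm w p x.
Proof. exact: powR_ge0. Qed.

Lemma Ld_add f g : Ld w p f -> Ld w p g -> Ld w p (fun x k => f x k + g x k).
Proof.
move=> opf opg; have nn x (_ : dwp w p x) := d_norm_ge0 x.
have [Cf Cf0 Hf] := is_op_bound nn opf; have [Cg Cg0 Hg] := is_op_bound nn opg.
case: opf => fd [flin _]; case: opg => gd [glin _].
split; first by move=> x dx; exact: d_memD (fd _ dx) (gd _ dx).
split; first by move=> a x y dx dy; rewrite flin // glin //; apply: funext => k; ring.
have [K K0 HK] := d_norm_quasi_triangle w_weight p_ge1.
exists (K * (Cf + Cg)) => x dx.
have := HK _ _ (fd _ dx) (gd _ dx); have := Hf _ dx; have := Hg _ dx.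
(* Generalizing the norms keeps the rewrites below from unfolding [d_norm]. *)
move: (d_norm w p (fun k => f x k + g x k)) (d_norm w p (f x)) (d_norm w p (g x)).
move: (d_norm w p x) => n s a b gb fa sab; apply: le_trans sab _.
by rewrite -mulrA; apply: ler_wpM2l => //; rewrite mulrDl lerD.
Qed.

Lemma Ld_comp_index (h g : nat -> nat) :
  cancel h g -> h @ \oo --> \oo -> Ld w p (fun x => x \o h).
Proof.
move=> hK h_oo; split; first by move=> x; exact: d_mem_comp hK h_oo.
split=> //; exists 1 => x dx; rewrite mul1r; exact: d_norm_comp_le dx.
Qed.

Lemma d_series0 : d_series w p (fun=> 0) = 0.
Proof. by rewrite /d_series eseries0 // => n _ _; rewrite rearr0 powR0 ?mulr0 ?gt_eqF. Qed.

Lemma Ld0 : Ld w p (fun _ _ => 0).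
Proof.
split.
  by move=> _ _; split; [exact: cvg_cst | rewrite -/(d_series _ _ _) d_series0 ltry].
split; first by move=> a x y _ _; apply: funext => k; rewrite mulr0 addr0.
by exists 0 => x _; rewrite mul0r d_normE d_series0 /= powR0 // invr_neq0 // gt_eqF.
Qed.

End LorentzOperators.

Section Interleaving.
Variable R : realType.
Implicit Types (a c : nat -> R).

Definition parity_index (b : bool) k := (b + k.*2)%N.

Definition interleave a c : nat -> R := fun m => if odd m then c m./2 else a m./2.

Lemma parity_indexK b : cancel (parity_index b) half.
Proof. by move=> k; rewrite /parity_index half_bit_double. Qed.

Lemma parity_index_cvg b : parity_index b @ \oo --> \oo.
Proof.
move=> P [n _ Pn]; exists n => // m /= nm; apply: Pn => /=.
by rewrite /parity_index -addnn; lia.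
Qed.

Lemma interleave_parity b a c : interleave a c \o parity_index b = if b then c else a.
Proof.
apply: funext => k.
by rewrite /= /interleave /parity_index oddD odd_double half_bit_double; case: b.
Qed.

End Interleaving.

Section LpInterleaving.
Variables (R : realType) (p : R).
Hypothesis p_gt0 : 0 < p.
Implicit Types (a c : nat -> R).

Definition lp_series a := (\sum_(n <oo) (`|a n| `^ p)%:E)%E.

Lemma lp_series_ge0 a : (0 <= lp_series a)%E.
Proof. by apply: nneseries_ge0 => n _ _; rewrite lee_fin powR_ge0. Qed.

Lemma lp_series_fin_num a : lp p a -> lp_series a \is a fin_num.
Proof. by move=> la; rewrite ge0_fin_numE ?lp_series_ge0. Qed.

Lemma lp_series_interleave_le a c :
  (lp_series (interleave a c) <= lp_series a + lp_series c)%E.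
Proof.
apply: le_trans (nneseries_le_pairs _) _ => [n|]; first by rewrite lee_fin powR_ge0.
rewrite /lp_series -nneseriesD => [|n _ _|n _ _]; try by rewrite lee_fin powR_ge0.
apply: lee_nneseries => [n _ _|k _]; first by rewrite adde_ge0 // lee_fin powR_ge0.
by rewrite /interleave /= odd_double doubleK uphalf_double /=.
Qed.

Lemma lp_interleave a c : lp p a -> lp p c -> lp p (interleave a c).
Proof.
move=> la lc; apply: le_lt_trans (lp_series_interleave_le a c) _.
rewrite -(fineK (lp_series_fin_num la)) -(fineK (lp_series_fin_num lc)).
by rewrite -EFinD ltry.
Qed.

Lemma lp_norm_interleave_le a c : lp p a -> lp p c ->
  lp_norm p (interleave a c) <= 2 `^ p^-1 * (lp_norm p a + lp_norm p c).
Proof.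
move=> la lc; have fa := lp_series_fin_num la; have fc := lp_series_fin_num lc.
have fac := lp_series_fin_num (lp_interleave la lc).
have sa0 : 0 <= fine (lp_series a) by rewrite fine_ge0 ?lp_series_ge0.
have sc0 : 0 <= fine (lp_series c) by rewrite fine_ge0 ?lp_series_ge0.
have sac0 : 0 <= fine (lp_series (interleave a c)) by rewrite fine_ge0 ?lp_series_ge0.
have pV0 : 0 <= p^-1 by rewrite invr_ge0 ltW.
have sac : fine (lp_series (interleave a c)) <= fine (lp_series a) + fine (lp_series c).
  rewrite -(fineD fa fc); apply: fine_le fac _ (lp_series_interleave_le a c).
  by rewrite fin_numD fa fc.
apply: le_trans (ge0_ler_powR pV0 sac0 (addr_ge0 sa0 sc0) sac) _.
exact: (powR_add_le sa0 sc0 pV0).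
Qed.

Lemma lp0 : lp p (fun=> 0).
Proof.
rewrite /lp /lp_mem eseries0 ?ltry // => n _ _.
by rewrite normr0 powR0 ?gt_eqF.
Qed.

Lemma lp_norm0 : lp_norm p (fun=> 0) = 0.
Proof.
rewrite /lp_norm eseries0 /= => [|n _ _]; first by rewrite powR0 // invr_neq0 // gt_eqF.
by rewrite normr0 powR0 ?gt_eqF.
Qed.

End LpInterleaving.

Section FactorizationThroughJ.
Variables (R : realType) (w : nat -> R) (p : R).
Hypotheses (w_weight : lorentz_weight w) (p_ge1 : 1 <= p).
Implicit Types (S : (nat -> R) -> nat -> R).

Let p_gt0 : 0 < p. Proof. exact: lt_le_trans ltr01 p_ge1. Qed.

Let d_norm_nneg x (_ : dwp w p x) : 0 <= d_norm w p x := d_norm_ge0 w p x.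

Lemma Ldl0 : Ldl w p (fun _ _ => 0).
Proof.
split; first by move=> _ _; exact: lp0.
split; first by move=> a x y _ _; apply: funext => k; rewrite mulr0 addr0.
by exists 0 => x _; rewrite mul0r lp_norm0.
Qed.

Lemma Ldl_interleave f g : Ldl w p f -> Ldl w p g -> Ldl w p (fun x => interleave (f x) (g x)).
Proof.
move=> opf opg.
have [Cf Cf0 Hf] := is_op_bound d_norm_nneg opf.
have [Cg Cg0 Hg] := is_op_bound d_norm_nneg opg.
case: opf => fl [flin _]; case: opg => gl [glin _].
split; first by move=> x dx; exact: lp_interleave (fl _ dx) (gl _ dx).
split.
  move=> a x y dx dy; rewrite flin // glin //.
  by apply: funext => k; rewrite /interleave; case: odd.
exists (2 `^ p^-1 * (Cf + Cg)) => x dx.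
have := lp_norm_interleave_le p_gt0 (fl _ dx) (gl _ dx); have := Hf _ dx; have := Hg _ dx.
move: (lp_norm p (interleave (f x) (g x))) (lp_norm p (f x)) (lp_norm p (g x)).
move: (d_norm w p x) => n s a b gb fa sab; apply: le_trans sab _.
by rewrite -mulrA; apply: ler_wpM2l; rewrite ?powR_ge0 // mulrDl lerD.
Qed.

Definition factors_through_j S :=
  exists A B, Ld w p A /\ Ldl w p B /\ forall x, dwp w p x -> S x = A (jmap (B x)).

Lemma factors_through_j_ext S S' :
  (forall x, dwp w p x -> S x = S' x) -> factors_through_j S' -> factors_through_j S.
Proof.
move=> SS' [A [B [opA [opB S'E]]]]; exists A, B; do 2!split => //.
by move=> x dx; rewrite SS' // S'E.
Qed.

Lemma factors_through_j0 : factors_through_j (fun _ _ => 0).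
Proof.
exists (fun _ _ => 0), (fun _ _ => 0); split; first exact: Ld0.
by split; first exact: Ldl0.
Qed.

(* The direct sums d_{w,p} + d_{w,p} and l_p + l_p are realised inside d_{w,p} and l_p
   by interleaving even and odd coordinates. *)
Lemma factors_through_jD S1 S2 : factors_through_j S1 -> factors_through_j S2 ->
  factors_through_j (fun x k => S1 x k + S2 x k).
Proof.
move=> [A1 [B1 [opA1 [opB1 S1E]]]] [A2 [B2 [opA2 [opB2 S2E]]]].
have opP b : Ld w p (fun y => y \o parity_index b).
  exact: Ld_comp_index (parity_indexK b) (parity_index_cvg b).
exists (fun y k => A1 (y \o parity_index false) k + A2 (y \o parity_index true) k).
exists (fun x => interleave (B1 x) (B2 x)); split.
  have opAP (A : (nat -> R) -> nat -> R) b :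
      Ld w p A -> Ld w p (fun y => A (y \o parity_index b)).
    exact: is_op_comp d_norm_nneg d_norm_nneg (opP b).
  exact: Ld_add (opAP _ false opA1) (opAP _ true opA2).
split; first exact: Ldl_interleave.
by move=> x dx; rewrite /jmap !interleave_parity S1E // S2E.
Qed.

Lemma factors_through_j_sum n (F : nat -> (nat -> R) -> nat -> R) :
  (forall i, (i < n)%N -> factors_through_j (F i)) ->
  factors_through_j (fun x k => \sum_(i < n) F i x k).
Proof.
elim: n => [_|n IH FJ].
  apply: factors_through_j_ext factors_through_j0 => x _.
  by apply: funext => k; rewrite big_ord0.
apply: factors_through_j_ext (factors_through_jD (IH _) (FJ n _)) => [x _|i ni|//].
  by apply: funext => k; rewrite big_ord_recr.
by apply: FJ; exact: ltnW.
Qed.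

Lemma JT_sub_Jj B0 S : Ldl w p B0 -> JT w p (fun x => jmap (B0 x)) S -> Jj w p S.
Proof.
move=> opB0 [opS [n [A [B [opAB SE]]]]]; split=> //.
apply: factors_through_j_ext SE
  (factors_through_j_sum (F := fun i x => A i (jmap (B0 (B i x)))) _) => i ni.
have [opA opB] := opAB i ni.
exists (A i), (fun x => B0 (B i x)); split; first exact: opA.
by split; first exact: is_op_comp d_norm_nneg d_norm_nneg opB opB0.
Qed.

(* A right inverse V of B0 gives S = A j B = A T (V B). *)
Lemma Jj_sub_JT B0 V S :
  is_op (lp p) (lp_norm p) (dwp w p) (d_norm w p) V ->
  (forall z, lp p z -> B0 (V z) = z) ->
  Jj w p S -> JT w p (fun x => jmap (B0 x)) S.
Proof.
move=> opV B0K [opS [A [B [opA [opB SE]]]]]; split=> //.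
exists 1%N, (fun _ => A), (fun _ x => V (B x)); split.
  move=> i _; split; first exact: opA.
  by apply: is_op_comp d_norm_nneg _ opB opV => z _; exact: powR_ge0.
move=> x dx; apply: funext => k; rewrite big_ord1 SE //.
by rewrite /jmap B0K //; case: opB => + _; exact.
Qed.

End FactorizationThroughJ.

Section InverseOperator.
Variables (R : realType) (w : nat -> R) (p : R).
Variables (Y : set (nat -> R)) (U : (nat -> R) -> nat -> R).
Hypotheses (Y_lin : forall (a : R) y z, Y y -> Y z -> Y (fun n => a * y n + z n))
  (U_op : is_op Y (d_norm w p) (lp p) (lp_norm p) U)
  (U_onto : forall z, lp p z -> exists2 y, Y y & U y = z)
  (U_inj : forall y1 y2, Y y1 -> Y y2 -> U y1 = U y2 -> y1 = y2)
  (U_below : exists2 c : R, 0 < c & forall y, Y y -> c * d_norm w p y <= lp_norm p (U y)).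

Lemma is_op_inverse : exists V, is_op (lp p) (lp_norm p) Y (d_norm w p) V /\
  forall z, lp p z -> U (V z) = z.
Proof.
have [V VK] : {V : (nat -> R) -> nat -> R & forall z, lp p z -> Y (V z) /\ U (V z) = z}.
  apply: (choice (P := fun z y => lp p z -> Y y /\ U y = z)) => z.
  have [lz|nlz] := pselect (lp p z).
  - by have [y Yy Uy] := U_onto lz; exists y.
  - by exists (fun=> 0).
have [U_lp [U_lin _]] := U_op.
exists V; split; last by move=> z /VK [].
split; first by move=> z /VK [].
split.
  move=> a z1 z2 l1 l2; have [Y1 U1] := VK _ l1; have [Y2 U2] := VK _ l2.
  have Yu := Y_lin a Y1 Y2.
  have Uu : U (fun n => a * V z1 n + V z2 n) = (fun n => a * z1 n + z2 n).
    by rewrite U_lin // U1 U2.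
  have [Yv Uv] : Y (V (fun n => a * z1 n + z2 n)) /\
      U (V (fun n => a * z1 n + z2 n)) = fun n => a * z1 n + z2 n.
    by apply: VK; rewrite -Uu; exact: U_lp.
  by apply: U_inj => //; rewrite Uv Uu.
have [c c0 Uc] := U_below.
exists c^-1 => z lz; have [Yz Uz] := VK _ lz.
by rewrite ler_pdivlMl // -{2}Uz; exact: Uc.
Qed.

End InverseOperator.

Unset Implicit Arguments.

Theorem proposition4p2 (R : realType) (p : R) (w : nat -> R)
  (Y : set (nat -> R)) (P U : (nat -> R) -> (nat -> R)) :
  1 <= p ->
  lorentz_weight w ->
  closed_subspace_d w p Y ->
  (* P in L(d_{w,p}) is a projection with range Y *)
  Ld w p P ->
  (forall x, dwp w p x -> Y (P x)) ->
  (forall y, Y y -> P y = y) ->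
  (* U : Y -> l_p is an isomorphism onto l_p *)
  is_op Y (d_norm w p) (lp p) (lp_norm p) U ->
  (forall z, lp p z -> exists2 y, Y y & U y = z) ->
  (forall y1 y2, Y y1 -> Y y2 -> U y1 = U y2 -> y1 = y2) ->
  (exists2 c : R, 0 < c & forall y, Y y -> c * d_norm w p y <= lp_norm p (U y)) ->
  forall S : (nat -> R) -> (nat -> R),
    JT w p (fun x => jmap (U (P x))) S <-> Jj w p S.
Proof.
move=> p_ge1 w_weight [Y_d [_ [Y_lin _]]] P_op PY PK U_op U_onto U_inj U_below S.
have [V [V_op UVK]] := is_op_inverse Y_lin U_op U_onto U_inj U_below.
have UP_op : Ldl w p (fun x => U (P x)).
  apply: is_op_comp (is_op_codom PY P_op) U_op => x _; exact: powR_ge0.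
split; first exact: JT_sub_Jj.
apply: Jj_sub_JT (is_op_codom _ V_op) _ => // [z lz|z lz].
- by apply: Y_d; case: V_op => + _; exact.
- by rewrite PK ?UVK //; case: V_op => + _; exact.
Qed.
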